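(* For integers $m\ge1$ let $f_m(x)=\frac{(m-x)^{m-1}}{e^{m-x}(m-1)!}$ for $x\le m$ and $f_m(x)=0$ for $x>m$, and for integers $m\ge2$ and real $z\ge0$ let $b(m,z)$ be the unique real number with $0\le b(m,z)\le z$ and $f_m(1-z)=f_m(1+z-b(m,z))$. There is an absolute constant $C>0$ such that: (i) if $n\ge 20$ and $0\le z\le \frac n{10}$, then $b(n,z)\le \frac z3$ and $\big|b(n,z)-\frac{2z^2}{3(n-1)}\big|\le C\frac{z^3}{n^2}$; (ii) if $n\ge1$ and $|x|\le \frac n3$, then $C^{-1}n^{-1/2}e^{-x^2/n}\le f_n(x)\le C n^{-1/2}e^{-x^2/(3n)}$; (iii) if $x$ is real and $h,H$ are integers with $1\le h\le H\le 10x^2$, then $f_h(x)h^{-2}\le C f_H(x)H^{-2}$; (iv) if $k,n$ are integers with $1\le k\le n$ and $x$ is real, then $f_k(x)\le C (n/k)^{1/2} f_n(x)$.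
   Context: $f_m$ is the density of $X_1+\cdots+X_m$, where the $X_i$ are independent with density $e^{x-1}$ for $x\le 1$ and $0$ for $x>1$. *)

From Stdlib Require Import Arith Factorial Reals Lra ClassicalEpsilon.
Open Scope R_scope.

Definition fm (m : nat) (x : R) : R :=
  if Rle_dec x (INR m) then
    (INR m - x) ^ (m - 1) / (exp (INR m - x) * INR (fact (m - 1)))
  else 0.

Definition b_spec (m : nat) (z b : R) : Prop :=
  0 <= b <= z /\ fm m (1 - z) = fm m (1 + z - b).

(* b(m,z): the (paper: unique) real b with b_spec m z b, chosen by Hilbert's
   epsilon; it equals that unique value whenever it exists. *)
Definition b (m : nat) (z : R) : R :=
  epsilon (inhabits 0) (fun b => b_spec m z b).

(* With S_k = k^k e^(-k) / k! = exp (- g_k) / sqrt k, where 1/2 < g_k <= 1 by a telescoping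
   estimate of Stirling's formula, one has f_(a+1)(x) = S_(a+1) exp (a ln (1 - s) + x) with
   s = x / (a + 1); the bounds -s - s^2 <= ln (1 - s) <= -s - s^2/3 for |s| <= 1/3 give (ii).

   For a < b and t = a + 1 - x >= 0, the ratio f_(a+1)(x) / f_(b+1)(x) equals
   (S_a / S_b) (b^b / a^a) t^a / (t + b - a)^b.  The function s |-> b ln (s + b - a) - a ln s
   is minimal at s = a, and its excess over the minimum is at least an explicit quadratic gain Q,
   so f_(a+1)(x) <= 5 sqrt ((b + 1) / (a + 1)) e^(-Q) f_(b+1)(x).  Dropping e^(-Q) gives (iv);
   for (iii), H <= 10 x^2 forces Q >= sqrt (H / h) / 640 (unless H < 40 h), and e^(-Q) then
   absorbs the factor (H / h)^(5/2).

   For (i), with N = n - 1 the equation f_n(1 - z) = f_n(1 + z - c) says that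
   N ln (N + z) - N ln (N - z + c) - 2 z + c vanishes.  This is decreasing in c, and Taylor
   bounds of ln to order four and five show that it changes sign between
   2 z^2 / (3 N) - 2 z^3 / N^2 and 2 z^2 / (3 N) + 2 z^3 / N^2, which traps b(n, z). *)

From Stdlib Require Import Factorial Reals Lra Lia Psatz ClassicalEpsilon.
From Coquelicot Require Import Coquelicot.
Open Scope R_scope.

Lemma le_of_derive_nonneg (f f' : R -> R) (a b : R) : a <= b ->
  (forall c, a <= c <= b -> is_derive f c (f' c)) ->
  (forall c, a < c < b -> 0 <= f' c) -> f a <= f b.
Proof.
  intros Hab Hd Hp. destruct (Req_dec a b) as [->|Hne]; [lra|].
  destruct (MVT_cor2 f f' a b) as [c [Hc1 Hc2]]; [lra| |].
  - intros c Hc. apply is_derive_Reals. now apply Hd.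
  - specialize (Hp c Hc2). nra.
Qed.

Lemma nonneg_of_derive_nonneg (g g' : R -> R) (u : R) : 0 <= u -> g 0 = 0 ->
  (forall c, 0 <= c <= u -> is_derive g c (g' c)) ->
  (forall c, 0 < c < u -> 0 <= g' c) -> 0 <= g u.
Proof. intros Hu H0 Hd Hp. rewrite <- H0. now apply (le_of_derive_nonneg g g'). Qed.

Lemma exp_le_exp (x y : R) : x <= y -> exp x <= exp y.
Proof. intros [H | ->]; [now apply Rlt_le, exp_increasing | lra]. Qed.

Lemma ln_1p_ge_pade (u : R) : 0 <= u -> 2 * u / (2 + u) <= ln (1 + u).
Proof.
  intros Hu. enough (0 <= ln (1 + u) - 2 * u / (2 + u)) by lra.
  apply (nonneg_of_derive_nonneg
    (fun w => ln (1 + w) - 2 * w / (2 + w))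
    (fun w => w ^ 2 / ((1 + w) * (2 + w) ^ 2))); auto.
  - cbv beta. rewrite Rplus_0_r, ln_1. field.
  - intros c Hc. auto_derive; [lra | field; lra].
  - intros c Hc. apply Rdiv_le_0_compat; [apply pow_le|]; nra.
Qed.

Lemma ln_1p_le_taylor3 (u : R) : 0 <= u -> ln (1 + u) <= u - u^2/2 + u^3/3.
Proof.
  intros Hu. enough (0 <= u - u^2/2 + u^3/3 - ln (1 + u)) by lra.
  apply (nonneg_of_derive_nonneg
    (fun w => w - w^2/2 + w^3/3 - ln (1 + w))
    (fun w => w ^ 3 / (1 + w))); auto.
  - cbv beta. rewrite Rplus_0_r, ln_1. field.
  - intros c Hc. auto_derive; [lra | field; lra].
  - intros c Hc. apply Rdiv_le_0_compat; [apply pow_le|]; lra.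
Qed.

Lemma ln_1p_ge_taylor4 (u : R) : 0 <= u -> u - u^2/2 + u^3/3 - u^4/4 <= ln (1 + u).
Proof.
  intros Hu. enough (0 <= ln (1 + u) - (u - u^2/2 + u^3/3 - u^4/4)) by lra.
  apply (nonneg_of_derive_nonneg
    (fun w => ln (1 + w) - (w - w^2/2 + w^3/3 - w^4/4))
    (fun w => w ^ 4 / (1 + w))); auto.
  - cbv beta. rewrite Rplus_0_r, ln_1. field.
  - intros c Hc. auto_derive; [lra | field; lra].
  - intros c Hc. apply Rdiv_le_0_compat; [apply pow_le|]; lra.
Qed.

Lemma ln_1p_le_taylor5 (u : R) : 0 <= u ->
  ln (1 + u) <= u - u^2/2 + u^3/3 - u^4/4 + u^5/5.
Proof.
  intros Hu. enough (0 <= u - u^2/2 + u^3/3 - u^4/4 + u^5/5 - ln (1 + u)) by lra.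
  apply (nonneg_of_derive_nonneg
    (fun w => w - w^2/2 + w^3/3 - w^4/4 + w^5/5 - ln (1 + w))
    (fun w => w ^ 5 / (1 + w))); auto.
  - cbv beta. rewrite Rplus_0_r, ln_1. field.
  - intros c Hc. auto_derive; [lra | field; lra].
  - intros c Hc. apply Rdiv_le_0_compat; [apply pow_le|]; lra.
Qed.

Lemma ln_1m_le_taylor4 (v : R) : 0 <= v < 1 ->
  ln (1 - v) <= - (v + v^2/2 + v^3/3 + v^4/4).
Proof.
  intros Hv. enough (0 <= - (v + v^2/2 + v^3/3 + v^4/4) - ln (1 - v)) by lra.
  apply (nonneg_of_derive_nonneg
    (fun w => - (w + w^2/2 + w^3/3 + w^4/4) - ln (1 - w))
    (fun w => w ^ 4 / (1 - w))); [lra| | |].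
  - cbv beta. rewrite Rminus_0_r, ln_1. field.
  - intros c Hc. auto_derive; [lra | field; lra].
  - intros c Hc. apply Rdiv_le_0_compat; [apply pow_le|]; lra.
Qed.

(* The coefficient 1/2 of v^5 (instead of 1/5) absorbs the whole tail for v <= 1/2. *)
Lemma ln_1m_ge_taylor5 (v : R) : 0 <= v <= 1/2 ->
  - (v + v^2/2 + v^3/3 + v^4/4 + v^5/2) <= ln (1 - v).
Proof.
  intros Hv. enough (0 <= ln (1 - v) + (v + v^2/2 + v^3/3 + v^4/4 + v^5/2)) by lra.
  apply (nonneg_of_derive_nonneg
    (fun w => ln (1 - w) + (w + w^2/2 + w^3/3 + w^4/4 + w^5/2))
    (fun w => w ^ 4 * (5/2 - 1 / (1 - w)))); [lra| | |].
  - cbv beta. rewrite Rminus_0_r, ln_1. field.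
  - intros c Hc. auto_derive; [lra | field; lra].
  - intros c Hc. apply Rmult_le_pos; [apply pow_le; lra|].
    enough (1 / (1 - c) <= 2) by lra.
    apply Rmult_le_reg_r with (1 - c); [lra|]. field_simplify; lra.
Qed.

Lemma ln_1m_quadratic_bounds (s : R) : -1/3 <= s <= 1/3 ->
  - s - s^2 <= ln (1 - s) <= - s - s^2/3.
Proof.
  intros Hs. destruct (Rle_lt_dec 0 s) as [Hp|Hn].
  - pose proof (ln_1m_le_taylor4 s ltac:(lra)). pose proof (ln_1m_ge_taylor5 s ltac:(lra)).
    split; nra.
  - replace (1 - s) with (1 + - s) by ring.
    pose proof (ln_1p_le_taylor3 (- s) ltac:(lra)).
    pose proof (ln_1p_ge_taylor4 (- s) ltac:(lra)).
    split; nra.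
Qed.

Definition stirling_term (k : nat) : R := INR k ^ k * exp (- INR k) / INR (fact k).

Definition stirling_gap (k : nat) : R :=
  ln (INR (fact k)) + INR k - (INR k + /2) * ln (INR k).

Lemma stirling_gap_succ (k : nat) : (1 <= k)%nat ->
  stirling_gap (S k) = stirling_gap k + 1 - (INR k + /2) * ln (1 + / INR k).
Proof.
  intros Hk. assert (Hk' : 1 <= INR k) by (apply (le_INR 1); lia).
  unfold stirling_gap.
  rewrite fact_simpl, mult_INR, S_INR, ln_mult by (lra || apply INR_fact_lt_0).
  replace (1 + / INR k) with ((INR k + 1) / INR k) by (field; lra).
  rewrite ln_div by lra. ring.
Qed.

Lemma mid_ln_1p_inv_bounds (x : R) : 1 <= x ->
  1 <= (x + /2) * ln (1 + / x) <= 1 + / (2 * x * (x + 1)).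
Proof.
  intros Hx. assert (Hu : 0 <= / x) by (apply Rlt_le, Rinv_0_lt_compat; lra).
  split.
  - pose proof (ln_1p_ge_pade _ Hu).
    eapply Rle_trans; [|apply Rmult_le_compat_l; [lra|eassumption]].
    right. field. lra.
  - pose proof (ln_1p_le_taylor3 _ Hu).
    eapply Rle_trans; [apply Rmult_le_compat_l; [lra|eassumption]|].
    replace ((x + /2) * (/ x - (/ x) ^ 2 / 2 + (/ x) ^ 3 / 3))
      with (1 + (x + 2) / (12 * x ^ 3)) by (field; lra).
    apply Rplus_le_compat_l.
    apply Rmult_le_reg_r with (12 * x ^ 3 * (2 * x * (x + 1))).
    { assert (0 < x ^ 3) by (apply pow_lt; lra). nra. }
    field_simplify; nra.
Qed.

Lemma stirling_gap_bounds (k : nat) : (1 <= k)%nat ->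
  /2 + / (2 * INR k) <= stirling_gap k <= 1.
Proof.
  induction k as [|k IH]; intros Hk; [lia|].
  destruct (Nat.eq_dec k 0) as [->|Hk0].
  - unfold stirling_gap. simpl. rewrite ln_1. lra.
  - assert (Hk' : 1 <= INR k) by (apply (le_INR 1); lia).
    specialize (IH ltac:(lia)). pose proof (mid_ln_1p_inv_bounds (INR k) Hk').
    rewrite stirling_gap_succ, S_INR by lia.
    assert (/ (2 * INR k) - / (2 * INR k * (INR k + 1)) = / (2 * (INR k + 1)))
      by (field; lra).
    lra.
Qed.

Lemma stirling_term_eq (k : nat) : (1 <= k)%nat ->
  stirling_term k = exp (- stirling_gap k) / sqrt (INR k).
Proof.
  intros Hk. assert (Hk' : 1 <= INR k) by (apply (le_INR 1); lia).
  unfold stirling_term, stirling_gap.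
  rewrite <- (exp_ln (INR k ^ k)), ln_pow by (try apply pow_lt; lra).
  rewrite <- Rpower_sqrt by lra. unfold Rpower, Rdiv.
  replace (/ INR (fact k)) with (exp (- ln (INR (fact k))))
    by (rewrite exp_Ropp, exp_ln by apply INR_fact_lt_0; reflexivity).
  rewrite <- !exp_Ropp, <- !exp_plus. f_equal. ring.
Qed.

Lemma stirling_term_pos (k : nat) : 0 < stirling_term k.
Proof.
  unfold stirling_term. apply Rdiv_lt_0_compat; [|apply INR_fact_lt_0].
  apply Rmult_lt_0_compat; [|apply exp_pos].
  destruct k as [|k]; [simpl; lra|]. apply pow_lt, lt_0_INR; lia.
Qed.

Lemma stirling_term_0 : stirling_term 0 = 1.
Proof. unfold stirling_term. simpl. rewrite Ropp_0, exp_0. lra. Qed.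

Lemma stirling_term_sqr_bounds (k : nat) : (1 <= k)%nat ->
  / (9 * INR k) <= stirling_term k ^ 2 <= / INR k.
Proof.
  intros Hk. assert (Hk' : 1 <= INR k) by (apply (le_INR 1); lia).
  pose proof (stirling_gap_bounds k Hk).
  assert (0 < / (2 * INR k)) by (apply Rinv_0_lt_compat; lra).
  assert (Hsq : stirling_term k ^ 2 = exp (- stirling_gap k) ^ 2 / INR k).
  { rewrite stirling_term_eq by lia. unfold Rdiv. rewrite Rpow_mult_distr, pow_inv.
    now rewrite pow2_sqrt by lra. }
  assert (He1 : exp (- stirling_gap k) <= 1) by (rewrite <- exp_0; apply exp_le_exp; lra).
  assert (He3 : / 3 <= exp (- stirling_gap k)).
  { apply Rle_trans with (exp (- (1))); [|apply exp_le_exp; lra].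
    rewrite exp_Ropp. apply Rinv_le_contravar; [apply exp_pos | apply exp_le_3]. }
  rewrite Hsq. unfold Rdiv. split.
  - rewrite Rinv_mult. apply Rmult_le_compat_r; [apply Rlt_le, Rinv_0_lt_compat; lra|].
    replace (/ 9) with ((/ 3) ^ 2) by field. apply pow_incr. lra.
  - rewrite <- (Rmult_1_l (/ INR k)) at 2.
    apply Rmult_le_compat_r; [apply Rlt_le, Rinv_0_lt_compat; lra|].
    rewrite <- (pow1 2). apply pow_incr. pose proof (exp_pos (- stirling_gap k)). lra.
Qed.

Lemma stirling_term_ratio_le (a b : nat) : (a <= b)%nat ->
  stirling_term a / stirling_term b <= 5 * sqrt (INR (S b) / INR (S a)).
Proof.
  intros Hab.
  assert (HAB : INR a <= INR b) by (apply le_INR; lia).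
  pose proof (pos_INR a). pose proof (stirling_term_pos a). pose proof (stirling_term_pos b).
  rewrite <- (sqrt_pow2 (stirling_term a / stirling_term b))
    by (apply Rlt_le, Rdiv_lt_0_compat; lra).
  rewrite <- (sqrt_pow2 5), <- sqrt_mult by (try apply pow_le; try apply Rdiv_le_0_compat;
    rewrite ?S_INR; lra).
  apply sqrt_le_1_alt. rewrite !S_INR.
  replace ((stirling_term a / stirling_term b) ^ 2) with (stirling_term a ^ 2 / stirling_term b ^ 2)
    by (field; lra).
  destruct (Nat.eq_dec b 0) as [->|Hb].
  { replace a with 0%nat by lia. rewrite stirling_term_0. simpl. lra. }
  assert (HB : 1 <= INR b) by (apply (le_INR 1); lia).
  destruct (stirling_term_sqr_bounds b ltac:(lia)) as [Hb9 _].
  apply Rle_trans with (stirling_term a ^ 2 * (9 * INR b)).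
  { unfold Rdiv. apply Rmult_le_compat_l; [apply pow_le; lra|].
    rewrite <- (Rinv_inv (9 * INR b)).
    apply Rinv_le_contravar; [apply Rinv_0_lt_compat; lra | exact Hb9]. }
  destruct (Nat.eq_dec a 0) as [->|Ha].
  { rewrite stirling_term_0. simpl. lra. }
  assert (HA : 1 <= INR a) by (apply (le_INR 1); lia).
  destruct (stirling_term_sqr_bounds a ltac:(lia)) as [_ Ha1].
  apply Rle_trans with (/ INR a * (9 * INR b)); [apply Rmult_le_compat_r; lra|].
  apply Rmult_le_reg_r with (INR a * (INR a + 1)); [nra|].
  field_simplify; nra.
Qed.

Lemma fm_succ (a : nat) (x : R) : x <= INR (S a) ->
  fm (S a) x = (INR (S a) - x) ^ a * exp (- (INR (S a) - x)) / INR (fact a).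
Proof.
  intros Hx. unfold fm. destruct (Rle_dec x (INR (S a))); [|lra].
  replace (S a - 1)%nat with a by lia. rewrite exp_Ropp. field.
  split; [apply Rgt_not_eq, exp_pos | apply INR_fact_neq_0].
Qed.

Lemma fm_above (m : nat) (x : R) : INR m < x -> fm m x = 0.
Proof. intros Hx. unfold fm. destruct (Rle_dec x (INR m)); [lra | reflexivity]. Qed.

Lemma fm_nonneg (m : nat) (x : R) : 0 <= fm m x.
Proof.
  unfold fm. destruct (Rle_dec x (INR m)); [|lra].
  apply Rdiv_le_0_compat; [apply pow_le; lra|].
  apply Rmult_lt_0_compat; [apply exp_pos | apply INR_fact_lt_0].
Qed.

Lemma pow_exp_ln (x : R) (n : nat) : 0 < x -> x ^ n = exp (INR n * ln x).
Proof. intros Hx. now rewrite <- ln_pow, exp_ln by (try apply pow_lt; assumption). Qed.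

Lemma fm_exp_ln (n : nat) (x : R) : (1 <= n)%nat -> x < INR n ->
  fm n x = exp ((INR n - 1) * ln (INR n - x) - (INR n - x)) / INR (fact (n - 1)).
Proof.
  intros Hn Hx. destruct n as [|a]; [lia|].
  rewrite fm_succ, pow_exp_ln, <- exp_plus by lra.
  replace (S a - 1)%nat with a by lia. rewrite S_INR. f_equal. f_equal. ring.
Qed.

Lemma fm_stirling (a : nat) (x : R) : x < INR (S a) ->
  fm (S a) x = stirling_term (S a) * exp (INR a * ln (1 - x / INR (S a)) + x).
Proof.
  intros Hx. rewrite fm_succ by lra. unfold stirling_term.
  rewrite fact_simpl, mult_INR. set (N := INR (S a)) in *.
  assert (HN : 1 <= N) by (apply (le_INR 1); lia).
  assert (Hs : 0 < 1 - x / N).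
  { enough (x / N < 1) by lra. apply Rmult_lt_reg_r with N; [lra|].
    unfold Rdiv. rewrite Rmult_assoc, Rinv_l, Rmult_1_r by lra. lra. }
  rewrite exp_plus, <- pow_exp_ln by exact Hs.
  replace (N - x) with (N * (1 - x / N)) by (field; lra).
  rewrite Rpow_mult_distr. change (N ^ S a) with (N * N ^ a).
  replace (exp (- (N * (1 - x / N)))) with (exp (- N) * exp x)
    by (rewrite <- exp_plus; f_equal; field; lra).
  field. split; [apply INR_fact_neq_0 | lra].
Qed.

(* Lower bound for the excess of [s |-> B ln (s + B - A) - A ln s] over its minimum at [s = A]:
   on the segment between [A] and [t], its derivative [(B - A) (s - A) / (s (s + B - A))] is
   compared with [(B - A) (s - A) / ((A + |t - A|) (B + |t - A|))]. *)
Definition index_gain (A B t : R) : R :=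
  (B - A) * Rabs (t - A) ^ 2 / (2 * ((A + Rabs (t - A)) * (B + Rabs (t - A)))).

Lemma index_gain_nonneg (A B t : R) : 0 <= A -> A <= B -> 0 <= index_gain A B t.
Proof.
  intros HA HAB. unfold index_gain. pose proof (Rabs_pos (t - A)).
  destruct (Req_dec (Rabs (t - A)) 0) as [->|Hy].
  { rewrite pow_i, Rmult_0_r by lia. unfold Rdiv. lra. }
  apply Rdiv_le_0_compat; [apply Rmult_le_pos; [lra | apply pow_le; lra] | nra].
Qed.

Lemma index_gain_le_log_excess (A B t : R) : 0 < A -> A <= B -> 0 < t ->
  B * ln B - A * ln A + index_gain A B t <= B * ln (t + (B - A)) - A * ln t.
Proof.
  intros HA HAB Ht. set (D := B - A). set (y := Rabs (t - A)).
  set (M := (A + y) * (B + y)).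
  assert (Hy : 0 <= y) by apply Rabs_pos.
  assert (HM : 0 < M) by (unfold M; nra).
  replace (index_gain A B t) with (D * (t - A) ^ 2 / (2 * M))
    by (unfold index_gain, M, y, D; now rewrite <- !Rsqr_pow2, <- Rsqr_abs).
  replace B with (A + D) by (unfold D; ring).
  set (K := fun s => (A + D) * ln (s + D) - A * ln s - D * (s - A) ^ 2 / (2 * M)).
  set (K' := fun s => D * (s - A) * (M - s * (s + D)) / (s * (s + D) * M)).
  assert (HK : forall c, 0 < c -> is_derive K c (K' c)).
  { intros c Hc. unfold K, K'. auto_derive; [unfold D; nra|]. field. unfold D; nra. }
  enough (HKt : K A <= K t).
  { unfold K in HKt. replace ((A - A) ^ 2) with 0 in HKt by ring. lra. }
  destruct (Rle_lt_dec A t) as [Hat|Hta].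
  - assert (Hyv : y = t - A) by (unfold y; rewrite Rabs_right; lra).
    apply (le_of_derive_nonneg K K'); [lra | intros c Hc; apply HK; lra |].
    intros c Hc. unfold K'. apply Rdiv_le_0_compat; [|apply Rmult_lt_0_compat; unfold D in *; nra].
    apply Rmult_le_pos; [unfold D; nra|]. unfold M. rewrite Hyv. unfold D. nra.
  - assert (Hyv : y = A - t) by (unfold y; rewrite Rabs_left; lra).
    apply Ropp_le_cancel.
    apply (le_of_derive_nonneg (fun s => - K s) (fun s => - K' s)); [lra | |].
    + intros c Hc. apply (is_derive_opp K). apply HK. lra.
    + intros c Hc. unfold K'. rewrite <- Rdiv_opp_l.
      apply Rdiv_le_0_compat; [|apply Rmult_lt_0_compat; unfold D in *; nra].
      enough (D * (c - A) * (M - c * (c + D)) <= 0) by lra.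
      assert (c * (c + D) <= M) by (unfold M; rewrite Hyv; unfold D; nra).
      assert (D * (c - A) <= 0) by (unfold D; nra). nra.
Qed.

Lemma inv_pow_shift_le_index_gain (b : nat) (t : R) : (1 <= b)%nat -> 0 <= t ->
  / (t + INR b) ^ b <= / INR b ^ b * exp (- index_gain 0 (INR b) t).
Proof.
  intros Hb Ht. assert (HB : 1 <= INR b) by (apply (le_INR 1); lia).
  unfold index_gain. rewrite !Rminus_0_r, !Rplus_0_l, Rabs_right by lra.
  destruct (Req_dec t 0) as [->|Htn].
  { rewrite Rplus_0_l, pow_i, !Rmult_0_r by lia. unfold Rdiv.
    rewrite Rmult_0_l, Ropp_0, exp_0. lra. }
  replace (INR b * t ^ 2 / (2 * (t * (INR b + t)))) with (INR b * t / (2 * (INR b + t)))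
    by (field; lra).
  rewrite (pow_exp_ln (t + INR b)), (pow_exp_ln (INR b)) by lra.
  rewrite <- !exp_Ropp, <- exp_plus. apply exp_le_exp.
  enough (INR b * t / (2 * (INR b + t)) <= INR b * (ln (t + INR b) - ln (INR b))) by lra.
  replace (t + INR b) with (INR b * (1 + t / INR b)) by (field; lra).
  rewrite ln_mult by (try apply Rplus_lt_le_0_compat, Rdiv_le_0_compat; lra).
  apply Rle_trans with (INR b * (2 * (t / INR b) / (2 + t / INR b))).
  - apply Rmult_le_reg_r with (2 * (INR b + t) * (2 * INR b + t)); [nra|].
    field_simplify; nra.
  - apply Rmult_le_compat_l; [lra|].
    replace (ln (INR b) + ln (1 + t / INR b) - ln (INR b)) with (ln (1 + t / INR b)) by ring.
    apply ln_1p_ge_pade, Rdiv_le_0_compat; lra.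
Qed.

Lemma pow_ratio_le_index_gain (a b : nat) (t : R) : (a <= b)%nat -> (1 <= b)%nat -> 0 <= t ->
  t ^ a / (t + (INR b - INR a)) ^ b
  <= INR a ^ a / INR b ^ b * exp (- index_gain (INR a) (INR b) t).
Proof.
  intros Hab Hb Ht.
  assert (HB : 1 <= INR b) by (apply (le_INR 1); lia).
  assert (HAB : INR a <= INR b) by (apply le_INR; lia).
  destruct (Nat.eq_dec a 0) as [->|Ha0].
  { simpl INR. rewrite !pow_O, Rminus_0_r. unfold Rdiv. rewrite !Rmult_1_l.
    now apply inv_pow_shift_le_index_gain. }
  assert (HA : 0 < INR a) by (apply lt_0_INR; lia).
  destruct (Req_dec t 0) as [->|Htn].
  { rewrite pow_i by lia. unfold Rdiv at 1. rewrite Rmult_0_l.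
    apply Rmult_le_pos; [|apply Rlt_le, exp_pos].
    apply Rdiv_le_0_compat; apply pow_le || apply pow_lt; lra. }
  pose proof (index_gain_le_log_excess (INR a) (INR b) t HA HAB ltac:(lra)).
  rewrite (pow_exp_ln t), (pow_exp_ln (t + _)), (pow_exp_ln (INR a)), (pow_exp_ln (INR b))
    by lra.
  unfold Rdiv. rewrite <- !exp_Ropp, <- !exp_plus. apply exp_le_exp. lra.
Qed.

Lemma fm_succ_le_index_gain (a b : nat) (x : R) : (a < b)%nat -> x <= INR (S a) ->
  fm (S a) x <= stirling_term a / stirling_term b
                * exp (- index_gain (INR a) (INR b) (INR (S a) - x)) * fm (S b) x.
Proof.
  intros Hab Hx.
  assert (HAB : INR a < INR b) by (apply lt_INR; lia).
  pose proof (pos_INR a).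
  rewrite (fm_succ a), (fm_succ b) by (rewrite ?S_INR in *; lra).
  set (t := INR (S a) - x). set (d := INR b - INR a).
  replace (INR (S b) - x) with (t + d) by (unfold t, d; rewrite !S_INR; ring).
  assert (Ht : 0 <= t) by (unfold t; lra).
  set (E := exp (- index_gain (INR a) (INR b) t)).
  assert (Hpow : t ^ a <= INR a ^ a / INR b ^ b * E * (t + d) ^ b).
  { assert (0 < (t + d) ^ b) by (apply pow_lt; unfold d; lra).
    apply Rmult_le_reg_r with (/ (t + d) ^ b); [now apply Rinv_0_lt_compat|].
    rewrite Rmult_assoc, Rinv_r, Rmult_1_r by lra.
    apply pow_ratio_le_index_gain; lia || lra. }
  apply Rle_trans with (INR a ^ a / INR b ^ b * E * (t + d) ^ b * exp (- t) / INR (fact a)).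
  { unfold Rdiv. apply Rmult_le_compat_r; [apply Rlt_le, Rinv_0_lt_compat, INR_fact_lt_0|].
    apply Rmult_le_compat_r; [apply Rlt_le, exp_pos | exact Hpow]. }
  right. unfold stirling_term.
  replace (exp (- INR b)) with (exp (- INR a) * exp (- d))
    by (rewrite <- exp_plus; f_equal; unfold d; ring).
  replace (exp (- (t + d))) with (exp (- t) * exp (- d))
    by (rewrite <- exp_plus; f_equal; ring).
  pose proof (exp_pos (- INR a)). pose proof (exp_pos (- d)).
  pose proof (INR_fact_lt_0 a). pose proof (INR_fact_lt_0 b).
  assert (0 < INR b ^ b) by (apply pow_lt; lra).
  field. repeat split; lra.
Qed.

Lemma fm_le_sqrt_ratio (C : R) (k n : nat) (x : R) : 5 <= C -> (1 <= k)%nat -> (k <= n)%nat ->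
  fm k x <= C * sqrt (INR n / INR k) * fm n x.
Proof.
  intros HC Hk Hkn. pose proof (fm_nonneg k x). pose proof (fm_nonneg n x).
  pose proof (sqrt_pos (INR n / INR k)).
  assert (Hk' : 1 <= INR k) by (apply (le_INR 1); lia).
  destruct (Nat.eq_dec k n) as [<-|Hne].
  { replace (INR k / INR k) with 1 by (field; lra). rewrite sqrt_1. nra. }
  destruct k as [|a]; [lia|]. destruct n as [|b]; [lia|].
  destruct (Rle_lt_dec x (INR (S a))) as [Hx|Hx].
  2: { rewrite fm_above by exact Hx. apply Rmult_le_pos; [nra | assumption]. }
  eapply Rle_trans; [apply (fm_succ_le_index_gain a b); [lia | exact Hx]|].
  apply Rmult_le_compat_r; [assumption|].
  pose proof (index_gain_nonneg (INR a) (INR b) (INR (S a) - x) (pos_INR a)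
    ltac:(apply le_INR; lia)).
  assert (exp (- index_gain (INR a) (INR b) (INR (S a) - x)) <= 1)
    by (rewrite <- exp_0; apply exp_le_exp; lra).
  pose proof (stirling_term_ratio_le a b ltac:(lia)).
  assert (0 <= stirling_term a / stirling_term b)
    by (apply Rlt_le, Rdiv_lt_0_compat; apply stirling_term_pos).
  pose proof (exp_pos (- index_gain (INR a) (INR b) (INR (S a) - x))).
  nra.
Qed.

Lemma pow6_le_exp (q : R) : 0 <= q -> q ^ 6 <= 6 ^ 6 * exp q.
Proof.
  intros Hq.
  replace (exp q) with (exp (q / 6) ^ 6)
    by (rewrite pow_exp_ln, ln_exp by apply exp_pos; f_equal; simpl; field).
  rewrite <- Rpow_mult_distr. apply pow_incr.
  pose proof (exp_ineq1_le (q / 6)). split; [lra | nra].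
Qed.

(* With [y = |t - (h - 1)|], in each of the cases [y <= h - 1], [h - 1 < y <= H - 1] and
   [H - 1 < y] the gain is at least [sqrt (H / h) / 640]. *)
Lemma sqr_index_gain_ge (h H t : R) : 1 <= h -> 2 * h <= H -> H <= 40 * (t - (h - 1)) ^ 2 ->
  H / h / 409600 <= index_gain (h - 1) (H - 1) t ^ 2.
Proof.
  intros Hh HhH Ht. unfold index_gain.
  replace (H - 1 - (h - 1)) with (H - h) by ring.
  set (y := Rabs (t - (h - 1))).
  assert (Hy : 0 <= y) by apply Rabs_pos.
  assert (Hyx : H <= 40 * y ^ 2) by (unfold y; rewrite <- Rsqr_pow2, <- Rsqr_abs, Rsqr_pow2; lra).
  assert (Hy0 : 0 < y) by nra.
  assert (HP : 0 < 2 * ((h - 1 + y) * (H - 1 + y))) by nra.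
  set (q := (H - h) * y ^ 2 / (2 * ((h - 1 + y) * (H - 1 + y)))).
  assert (Hq0 : 0 <= q) by (apply Rdiv_le_0_compat; nra).
  assert (Hr1 : 1 <= H / h) by (apply Rmult_le_reg_r with h; [lra|]; field_simplify; lra).
  assert (HrH : H / h <= H) by (apply Rmult_le_reg_r with h; [lra|]; field_simplify; nra).
  assert (Hq : forall p, 0 < p -> 2 * ((h - 1 + y) * (H - 1 + y)) <= p ->
            (H - h) * y ^ 2 / p <= q).
  { intros p Hp Hle. unfold q, Rdiv. apply Rmult_le_compat_l; [nra|].
    apply Rinv_le_contravar; lra. }
  destruct (Rle_lt_dec y (h - 1)) as [Ya|Ya]; [|destruct (Rle_lt_dec y (H - 1)) as [Yb|Yb]].
  - assert (H / h / 640 <= q).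
    { eapply Rle_trans; [|apply (Hq (8 * h * H)); nra].
      apply Rmult_le_reg_r with (8 * h * H); [nra|]. field_simplify; nra. }
    assert (H / h / 409600 <= (H / h / 640) ^ 2) by nra.
    assert ((H / h / 640) ^ 2 <= q ^ 2) by (apply pow_incr; lra). lra.
  - assert (y / 16 <= q).
    { eapply Rle_trans; [|apply (Hq (8 * H * y)); nra].
      apply Rmult_le_reg_r with (16 * (8 * H * y)); [nra|]. field_simplify; nra. }
    assert ((y / 16) ^ 2 <= q ^ 2) by (apply pow_incr; lra).
    nra.
  - assert (H / 16 <= q).
    { eapply Rle_trans; [|apply (Hq (8 * y ^ 2)); nra].
      apply Rmult_le_reg_r with (16 * (8 * y ^ 2)); [nra|]. field_simplify; nra. }
    assert ((H / 16) ^ 2 <= q ^ 2) by (apply pow_incr; lra).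
    nra.
Qed.

Lemma cube_ratio_exp_index_gain_le (h H : nat) (x : R) : (1 <= h)%nat -> (h <= H)%nat ->
  INR H <= 10 * x ^ 2 ->
  (INR H / INR h) ^ 3 * exp (- index_gain (INR h - 1) (INR H - 1) (INR h - x))
  <= 6 ^ 6 * 409600 ^ 3.
Proof.
  intros Hh HhH Hx.
  assert (Hh' : 1 <= INR h) by (apply (le_INR 1); lia).
  assert (HH' : INR h <= INR H) by (apply le_INR; lia).
  set (r := INR H / INR h). set (Q := index_gain _ _ _).
  assert (HQ : 0 <= Q) by (apply index_gain_nonneg; lra).
  assert (Hr : 1 <= r).
  { apply Rmult_le_reg_r with (INR h); unfold r; [lra|]. field_simplify; lra. }
  rewrite exp_Ropp. apply Rmult_le_reg_r with (exp Q); [apply exp_pos|].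
  rewrite Rmult_assoc, Rinv_l, Rmult_1_r by apply exp_neq_0.
  assert (HeQ : 1 <= exp Q) by (rewrite <- exp_0; apply exp_le_exp; lra).
  assert (Hcases : r <= 40 \/ r / 409600 <= Q ^ 2).
  { destruct (Rlt_le_dec (INR H) (40 * INR h)) as [Hsmall|H40].
    - left. apply Rmult_le_reg_r with (INR h); unfold r; [lra|]. field_simplify; lra.
    - right. apply sqr_index_gain_ge; [lra | lra |].
      replace (INR h - x - (INR h - 1)) with (1 - x) by ring. nra. }
  destruct Hcases as [Hr40|HQr].
  - assert (r ^ 3 <= 40 ^ 3) by (apply pow_incr; lra). nra.
  - assert (r ^ 3 <= 409600 ^ 3 * Q ^ 6).
    { replace (409600 ^ 3 * Q ^ 6) with ((409600 * Q ^ 2) ^ 3) by ring.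
      apply pow_incr. lra. }
    pose proof (pow6_le_exp Q HQ). nra.
Qed.

Lemma fm_div_sqr_le (h H : nat) (x : R) : (1 <= h)%nat -> (h <= H)%nat ->
  INR H <= 10 * x ^ 2 ->
  fm h x / INR h ^ 2 <= 5 * (6 ^ 6 * 409600 ^ 3) * fm H x / INR H ^ 2.
Proof.
  intros Hh HhH Hx. set (K := 6 ^ 6 * 409600 ^ 3).
  pose proof (fm_nonneg h x) as Hfh. pose proof (fm_nonneg H x) as HfH.
  assert (Hh' : 1 <= INR h) by (apply (le_INR 1); lia).
  assert (HH' : INR h <= INR H) by (apply le_INR; lia).
  assert (HK : 1 <= K) by (unfold K; lra).
  destruct (Nat.eq_dec h H) as [<-|Hne].
  { unfold Rdiv. apply Rmult_le_compat_r; [apply Rlt_le, Rinv_0_lt_compat, pow_lt|]; nra. }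
  destruct h as [|a]; [lia|]. destruct H as [|b]; [lia|].
  destruct (Rle_lt_dec x (INR (S a))) as [Hxa|Hxa].
  2: { rewrite fm_above by exact Hxa. unfold Rdiv. rewrite Rmult_0_l.
       apply Rmult_le_pos; [nra | apply Rlt_le, Rinv_0_lt_compat, pow_lt; lra]. }
  set (r := INR (S b) / INR (S a)).
  set (E := exp (- index_gain (INR a) (INR b) (INR (S a) - x))).
  assert (Hr : 1 <= r).
  { apply Rmult_le_reg_r with (INR (S a)); unfold r; [lra|]. field_simplify; lra. }
  assert (HE : 0 < E) by apply exp_pos.
  assert (HrE : r ^ 3 * E <= K).
  { unfold E. replace (INR a) with (INR (S a) - 1) by (rewrite S_INR; ring).
    replace (INR b) with (INR (S b) - 1) by (rewrite S_INR; ring).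
    now apply cube_ratio_exp_index_gain_le. }
  assert (Hfm : fm (S a) x <= 5 * r * E * fm (S b) x).
  { eapply Rle_trans; [apply (fm_succ_le_index_gain a b); [lia | exact Hxa]|].
    apply Rmult_le_compat_r; [exact HfH|]. apply Rmult_le_compat_r; [lra|].
    eapply Rle_trans; [apply stirling_term_ratio_le; lia|]. fold r.
    apply Rmult_le_compat_l; [lra|].
    rewrite <- (sqrt_pow2 r) at 2 by lra. apply sqrt_le_1_alt. nra. }
  replace (5 * K * fm (S b) x / INR (S b) ^ 2) with (5 * K / r ^ 2 * fm (S b) x / INR (S a) ^ 2)
    by (unfold r; field; split; lra).
  unfold Rdiv at 1 3. apply Rmult_le_compat_r; [apply Rlt_le, Rinv_0_lt_compat, pow_lt; lra|].
  eapply Rle_trans; [exact Hfm|]. apply Rmult_le_compat_r; [exact HfH|].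
  apply Rmult_le_reg_r with (r ^ 2); [apply pow_lt; lra|].
  replace (5 * K * / r ^ 2 * r ^ 2) with (5 * K) by (field; lra). nra.
Qed.

Lemma fm_exponent_bounds (a : nat) (x : R) : Rabs x <= INR (S a) / 3 ->
  - (5/4) - x ^ 2 / INR (S a)
  <= - stirling_gap (S a) + (INR a * ln (1 - x / INR (S a)) + x)
  <= - x ^ 2 / (3 * INR (S a)).
Proof.
  intros Hx. pose proof (stirling_gap_bounds (S a) ltac:(lia)) as HL.
  rewrite S_INR in *. set (N := INR a + 1) in *.
  assert (HN : 1 <= N) by (pose proof (pos_INR a); unfold N; lra).
  assert (0 < / (2 * N)) by (apply Rinv_0_lt_compat; lra).
  set (s := x / N). replace x with (N * s) in * by (unfold s; field; lra).
  replace (INR a) with (N - 1) by (unfold N; ring).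
  assert (Hs : -1/3 <= s <= 1/3).
  { apply Rabs_le_between in Hx. split; nra. }
  destruct (ln_1m_quadratic_bounds s Hs) as [Hl Hu].
  replace ((N * s) ^ 2 / N) with (N * s ^ 2) by (field; lra).
  replace (- (N * s) ^ 2 / (3 * N)) with (- (N * s ^ 2) / 3) by (field; lra).
  split.
  - assert ((N - 1) * (- s - s ^ 2) <= (N - 1) * ln (1 - s)) by (apply Rmult_le_compat_l; lra).
    nra.
  - assert ((N - 1) * ln (1 - s) <= (N - 1) * (- s - s ^ 2 / 3)) by (apply Rmult_le_compat_l; lra).
    nra.
Qed.

Lemma inv5_le_exp_m5_4 : / 5 <= exp (- (5/4)).
Proof.
  rewrite exp_Ropp. apply Rinv_le_contravar; [apply exp_pos|].
  replace (5/4) with (1 + 1/4) by field. rewrite exp_plus.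
  assert (Hq : exp (1/4) <= 4/3).
  { pose proof (exp_ineq1_le (- (1/4))) as Hm. rewrite exp_Ropp in Hm.
    pose proof (exp_pos (1/4)).
    apply Rmult_le_reg_r with (/ exp (1/4)); [now apply Rinv_0_lt_compat|].
    rewrite Rinv_r by lra. lra. }
  pose proof exp_le_3. pose proof (exp_pos 1). pose proof (exp_pos (1/4)). nra.
Qed.

Lemma fm_gaussian_bounds (C : R) (n : nat) (x : R) : 5 <= C -> (1 <= n)%nat ->
  Rabs x <= INR n / 3 ->
  / C * / sqrt (INR n) * exp (- x ^ 2 / INR n) <= fm n x /\
  fm n x <= C * / sqrt (INR n) * exp (- x ^ 2 / (3 * INR n)).
Proof.
  intros HC Hn Hx. destruct n as [|a]; [lia|].
  assert (HN : 1 <= INR (S a)) by (apply (le_INR 1); lia).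
  assert (Hxn : x < INR (S a)) by (apply Rabs_le_between in Hx; lra).
  rewrite fm_stirling, stirling_term_eq by (lia || lra).
  destruct (fm_exponent_bounds a x Hx) as [Hlo Hhi].
  set (e := - stirling_gap (S a) + _) in Hlo, Hhi.
  replace (exp (- stirling_gap (S a)) / sqrt (INR (S a)) * exp (INR a * ln (1 - x / INR (S a)) + x))
    with (/ sqrt (INR (S a)) * exp e) by (unfold e; rewrite exp_plus; unfold Rdiv; ring).
  replace (- (5/4) - x ^ 2 / INR (S a)) with (- (5/4) + - x ^ 2 / INR (S a)) in Hlo
    by (unfold Rdiv; ring).
  apply exp_le_exp in Hlo, Hhi. rewrite exp_plus in Hlo.
  pose proof inv5_le_exp_m5_4.
  assert (/ C <= / 5) by (apply Rinv_le_contravar; lra).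
  assert (0 < / sqrt (INR (S a))) by (apply Rinv_0_lt_compat, sqrt_lt_R0; lra).
  split.
  - rewrite (Rmult_comm (/ C)), Rmult_assoc. apply Rmult_le_compat_l; [lra|].
    eapply Rle_trans; [|exact Hlo]. apply Rmult_le_compat_r; [apply Rlt_le, exp_pos | lra].
  - rewrite (Rmult_comm C), Rmult_assoc. apply Rmult_le_compat_l; [lra|].
    eapply Rle_trans; [exact Hhi|]. rewrite <- (Rmult_1_l (exp _)) at 1.
    apply Rmult_le_compat_r; [apply Rlt_le, exp_pos | lra].
Qed.

(* With N = n - 1 this is ln (fm n (1 - z)) - ln (fm n (1 + z - c)). *)
Definition log_fm_gap (N z c : R) : R := N * ln (N + z) - N * ln (N - z + c) - 2 * z + c.

Lemma fm_eq_iff_log_fm_gap (n : nat) (z c : R) : (1 <= n)%nat -> 0 <= c <= z ->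
  z < INR n - 1 ->
  (fm n (1 - z) = fm n (1 + z - c) <-> log_fm_gap (INR n - 1) z c = 0).
Proof.
  intros Hn Hc Hz.
  rewrite !fm_exp_ln by (auto; lra).
  replace (INR n - (1 - z)) with (INR n - 1 + z) by ring.
  replace (INR n - (1 + z - c)) with (INR n - 1 - z + c) by ring.
  unfold log_fm_gap. pose proof (INR_fact_lt_0 (n - 1)). split.
  - intros E. apply (f_equal (fun w => w * INR (fact (n - 1)))) in E.
    unfold Rdiv in E. rewrite !Rmult_assoc, !Rinv_l, !Rmult_1_r in E by lra.
    apply exp_inv in E. lra.
  - intros E. f_equal. f_equal. lra.
Qed.

Lemma is_derive_log_fm_gap (N z c : R) : 0 < N - z + c ->
  is_derive (log_fm_gap N z) c ((c - z) / (N - z + c)).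
Proof. intros Hc. unfold log_fm_gap. auto_derive; [lra | field; lra]. Qed.

Lemma log_fm_gap_decreasing (N z c1 c2 : R) : 0 < N - z -> 0 <= c1 < c2 -> c2 <= z ->
  log_fm_gap N z c2 < log_fm_gap N z c1.
Proof.
  intros HNz Hc Hc2.
  destruct (MVT_cor2 (log_fm_gap N z) (fun c => (c - z) / (N - z + c)) c1 c2)
    as [c [E Hcc]]; [lra | |].
  - intros c Hc'. apply is_derive_Reals, is_derive_log_fm_gap. lra.
  - assert ((c - z) / (N - z + c) < 0) by (apply Rdiv_neg_pos; lra).
    nra.
Qed.

Lemma log_fm_gap_scaled (N z c : R) : 0 < N -> 0 <= z < N -> 0 <= c <= z ->
  log_fm_gap N z c = N * (ln (1 + z / N) - ln (1 - (z - c) / N) - z / N - (z - c) / N).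
Proof.
  intros HN Hz Hc. unfold log_fm_gap.
  assert (Hu : 0 <= z / N < 1).
  { split; [apply Rdiv_le_0_compat; lra|].
    apply Rmult_lt_reg_r with N; [lra|]. unfold Rdiv. rewrite Rmult_assoc, Rinv_l; lra. }
  assert ((z - c) / N <= z / N)
    by (apply Rmult_le_compat_r; [apply Rlt_le, Rinv_0_lt_compat|]; lra).
  replace (N + z) with (N * (1 + z / N)) by (field; lra).
  replace (N - z + c) with (N * (1 - (z - c) / N)) by (field; lra).
  rewrite !ln_mult by lra. field. lra.
Qed.

Lemma b_spec_b (n : nat) (z c : R) : b_spec n z c -> b_spec n z (b n z).
Proof. intros H. exact (epsilon_spec (inhabits 0) (b_spec n z) (ex_intro _ c H)). Qed.

Lemma b_at_0 (n : nat) : b n 0 = 0.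
Proof.
  assert (H0 : b_spec n 0 0) by (split; [lra | f_equal; ring]).
  destruct (b_spec_b n 0 0 H0) as [Hb _]. lra.
Qed.

Lemma b_between (n : nat) (z lo hi : R) : (1 <= n)%nat -> 0 <= lo < hi -> hi <= z ->
  z < INR n - 1 -> 0 < log_fm_gap (INR n - 1) z lo -> log_fm_gap (INR n - 1) z hi < 0 ->
  lo <= b n z <= hi.
Proof.
  intros Hn Hlo Hhi Hz Pl Ph.
  destruct (Ranalysis5.IVT_interv (fun c => - log_fm_gap (INR n - 1) z c) lo hi)
    as [c0 [Hc0 Ec0]]; [| lra | lra | lra |].
  { intros c Hc. apply derivable_continuous_pt.
    exists (- ((c - z) / (INR n - 1 - z + c))). apply is_derive_Reals.
    apply (is_derive_opp (log_fm_gap (INR n - 1) z)), is_derive_log_fm_gap. lra. }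
  (* The root [c0] makes [b_spec n z] satisfiable, so the epsilon-chosen [b n z] satisfies it. *)
  assert (Hs : b_spec n z c0).
  { split; [lra|]. apply fm_eq_iff_log_fm_gap; [lia | lra | lra | lra]. }
  destruct (b_spec_b n z c0 Hs) as [Hb Eb].
  apply fm_eq_iff_log_fm_gap in Eb; [|lia | lra | lra].
  split; apply Rnot_lt_le; intros Hlt.
  - assert (log_fm_gap (INR n - 1) z lo < log_fm_gap (INR n - 1) z (b n z))
      by (apply log_fm_gap_decreasing; lra).
    lra.
  - assert (log_fm_gap (INR n - 1) z (b n z) < log_fm_gap (INR n - 1) z hi)
      by (apply log_fm_gap_decreasing; lra).
    lra.
Qed.

Lemma taylor_gap_neg (u v : R) : 0 < u <= 1/9 -> v = u - 2/3 * u^2 - 2 * u^3 ->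
  (u - u^2/2 + u^3/3 - u^4/4 + u^5/5) + (v + v^2/2 + v^3/3 + v^4/4 + v^5/2) - u - v < 0.
Proof.
  intros Hu ->.
  assert (Hp : forall k, 0 <= u ^ k <= (1/9) ^ k)
    by (intros k; split; [apply pow_le | apply pow_incr]; lra).
  assert (H4 : 0 < u ^ 4) by (apply pow_lt; lra).
  set (q := -22/9 - 17/90*u + 127/81*u^2 + 109/27*u^3 + 1018/81*u^4 - 236/81*u^5
    - 9592/243*u^6 - 728/81*u^7 + 1388/27*u^8 + 200/9*u^9 - 80/3*u^10 - 16*u^11).
  assert (Hq : q <= -1).
  { pose proof (Hp 2%nat). pose proof (Hp 3%nat). pose proof (Hp 4%nat). pose proof (Hp 5%nat).
    pose proof (Hp 6%nat). pose proof (Hp 7%nat). pose proof (Hp 8%nat). pose proof (Hp 9%nat).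
    pose proof (Hp 10%nat). pose proof (Hp 11%nat). simpl ((1/9)^_) in *. unfold q. lra. }
  match goal with |- ?e < 0 => replace e with (u ^ 4 * q) by (unfold q; field) end.
  nra.
Qed.

Lemma taylor_gap_pos (u v : R) : 0 < u <= 1/9 -> v = u - 2/3 * u^2 + 2 * u^3 ->
  0 < (u - u^2/2 + u^3/3 - u^4/4) + (v + v^2/2 + v^3/3 + v^4/4) - u - v.
Proof.
  intros Hu ->.
  assert (Hp : forall k, 0 <= u ^ k <= (1/9) ^ k)
    by (intros k; split; [apply pow_le | apply pow_incr]; lra).
  assert (H4 : 0 < u ^ 4) by (apply pow_lt; lra).
  set (q := 14/9 + 4/9*u + 154/81*u^2 + 16/27*u^3 + 490/81*u^4 - 160/27*u^5 + 32/3*u^6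
    - 16/3*u^7 + 4*u^8).
  assert (Hq : 1 <= q).
  { pose proof (Hp 2%nat). pose proof (Hp 3%nat). pose proof (Hp 4%nat). pose proof (Hp 5%nat).
    pose proof (Hp 6%nat). pose proof (Hp 7%nat). pose proof (Hp 8%nat).
    simpl ((1/9)^_) in *. unfold q. lra. }
  match goal with |- 0 < ?e => replace e with (u ^ 4 * q) by (unfold q; field) end.
  nra.
Qed.

Lemma log_fm_gap_above_neg (N u : R) : 1 <= N -> 0 < u <= 1/9 ->
  log_fm_gap N (N * u) (N * (2/3 * u^2 + 2 * u^3)) < 0.
Proof.
  intros HN Hu. set (v := u - 2/3 * u^2 - 2 * u^3).
  assert (Hv : 0 <= v <= 1/2) by (unfold v; split; nra).
  assert (Hc : 0 <= 2/3 * u^2 + 2 * u^3 <= u) by (split; nra).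
  rewrite log_fm_gap_scaled
    by (lra || (split; nra) || (split; [apply Rmult_le_pos | apply Rmult_le_compat_l]; lra)).
  replace (N * u / N) with u by (field; lra).
  replace ((N * u - N * (2/3 * u^2 + 2 * u^3)) / N) with v by (unfold v; field; lra).
  pose proof (ln_1p_le_taylor5 u ltac:(lra)). pose proof (ln_1m_ge_taylor5 v Hv).
  pose proof (taylor_gap_neg u v Hu eq_refl).
  enough (ln (1 + u) - ln (1 - v) - u - v < 0) by nra. lra.
Qed.

Lemma log_fm_gap_below_pos (N u : R) : 1 <= N -> 0 < u <= 1/9 ->
  0 < log_fm_gap N (N * u) (N * (2/3 * u^2 - 2 * u^3)).
Proof.
  intros HN Hu. set (v := u - 2/3 * u^2 + 2 * u^3).
  assert (Hv : 0 <= v < 1) by (unfold v; split; nra).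
  assert (Hc : 0 <= 2/3 * u^2 - 2 * u^3 <= u) by (split; nra).
  rewrite log_fm_gap_scaled
    by (lra || (split; nra) || (split; [apply Rmult_le_pos | apply Rmult_le_compat_l]; lra)).
  replace (N * u / N) with u by (field; lra).
  replace ((N * u - N * (2/3 * u^2 - 2 * u^3)) / N) with v by (unfold v; field; lra).
  pose proof (ln_1p_ge_taylor4 u ltac:(lra)). pose proof (ln_1m_le_taylor4 v Hv).
  pose proof (taylor_gap_pos u v Hu eq_refl).
  enough (0 < ln (1 + u) - ln (1 - v) - u - v) by nra. lra.
Qed.

Lemma b_estimate (C : R) (n : nat) (z : R) : 3 <= C -> (20 <= n)%nat -> 0 <= z ->
  z <= INR n / 10 ->
  b n z <= z / 3 /\ Rabs (b n z - 2 * z ^ 2 / (3 * (INR n - 1))) <= C * z ^ 3 / INR n ^ 2.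
Proof.
  intros HC Hn Hz0 Hz.
  assert (Hn' : 20 <= INR n) by (replace 20 with (INR 20) by (simpl; lra); now apply le_INR).
  destruct (Req_dec z 0) as [->|Hzp].
  { rewrite b_at_0. replace (0 - 2 * 0 ^ 2 / (3 * (INR n - 1))) with 0 by (field; lra).
    replace (C * 0 ^ 3 / INR n ^ 2) with 0 by (field; lra). rewrite Rabs_R0. lra. }
  assert (HN : 19 <= INR n - 1) by lra. assert (EN : INR n = INR n - 1 + 1) by ring.
  set (N := INR n - 1) in *.
  set (u := z / N). replace z with (N * u) in * by (unfold u; field; lra).
  assert (Hu : 0 < u <= 1/9) by (split; nra).
  assert (Hb : N * (2/3 * u^2 - 2 * u^3) <= b n (N * u) <= N * (2/3 * u^2 + 2 * u^3)).
  { assert (0 <= 2/3 * u^2 - 2 * u^3) by nra.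
    assert (2/3 * u^2 + 2 * u^3 <= u) by nra.
    assert (0 < u ^ 3) by (apply pow_lt; lra).
    apply b_between; fold N; [lia | | apply Rmult_le_compat_l; lra | nra | |].
    - split; [apply Rmult_le_pos | apply Rmult_lt_compat_l]; lra.
    - apply log_fm_gap_below_pos; lra.
    - apply log_fm_gap_above_neg; lra. }
  split; [nra|].
  replace (2 * (N * u) ^ 2 / (3 * N)) with (N * (2/3 * u^2)) by (field; lra).
  apply Rle_trans with (N * (2 * u^3)).
  { apply Rabs_le. split; nra. }
  rewrite EN. apply Rmult_le_reg_r with ((N + 1) ^ 2); [apply pow_lt; lra|].
  replace (C * (N * u) ^ 3 / (N + 1) ^ 2 * (N + 1) ^ 2) with (N * u ^ 3 * (C * N ^ 2))
    by (field; lra).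
  replace (N * (2 * u ^ 3) * (N + 1) ^ 2) with (N * u ^ 3 * (2 * (N + 1) ^ 2)) by ring.
  apply Rmult_le_compat_l; [apply Rmult_le_pos, pow_le; lra | nra].
Qed.

Theorem lemma6 :
  exists C : R, 0 < C /\
    (* (i) *)
    (forall (n : nat) (z : R), (20 <= n)%nat -> 0 <= z -> z <= INR n / 10 ->
        b n z <= z / 3 /\
        Rabs (b n z - 2 * z ^ 2 / (3 * (INR n - 1))) <= C * z ^ 3 / INR n ^ 2) /\
    (* (ii) *)
    (forall (n : nat) (x : R), (1 <= n)%nat -> Rabs x <= INR n / 3 ->
        / C * / sqrt (INR n) * exp (- x ^ 2 / INR n) <= fm n x /\
        fm n x <= C * / sqrt (INR n) * exp (- x ^ 2 / (3 * INR n))) /\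
    (* (iii) *)
    (forall (x : R) (h H : nat), (1 <= h)%nat -> (h <= H)%nat -> INR H <= 10 * x ^ 2 ->
        fm h x / INR h ^ 2 <= C * fm H x / INR H ^ 2) /\
    (* (iv) *)
    (forall (k n : nat) (x : R), (1 <= k)%nat -> (k <= n)%nat ->
        fm k x <= C * sqrt (INR n / INR k) * fm n x).
Proof.
  assert (HK : 5 <= 5 * (6 ^ 6 * 409600 ^ 3)) by lra.
  exists (5 * (6 ^ 6 * 409600 ^ 3)). split; [lra|]. split; [|split; [|split]].
  - intros n z. apply b_estimate. lra.
  - intros n x. now apply fm_gaussian_bounds.
  - intros x h H. apply fm_div_sqr_le.
  - intros k n x. now apply fm_le_sqrt_ratio.
Qed.
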